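(* Let $N$ be a nonnegative integer, let $\eta_1,\eta_2$ be real numbers with $0<\eta_1,\eta_2<1$ and $\eta_1+\eta_2<1$, and let $u_1,v_1,u_2,v_2$ be arbitrary complex numbers. Then for all nonnegative integers $n_1,n_2$ with $n_1+n_2\le N$, \[ \sum_{\substack{x_1,x_2\ge 0\\ x_1+x_2\le N}} b_2(x_1,x_2;N;\eta_1,\eta_2)\,P_{n_1,n_2}(x_1,x_2)=(1-\eta_1u_1-\eta_2v_1)^{n_1}(1-\eta_1u_2-\eta_2v_2)^{n_2}. \]
   Context: Notation: $(a)_k=a(a+1)\cdots(a+k-1)$, $(a)_0=1$, is the Pochhammer symbol. For a nonnegative integer $N$ and nonnegative integers $m_1,m_2,x_1,x_2$ with $m_1+m_2\le N$, $x_1+x_2\le N$, and parameters $u_1,v_1,u_2,v_2$, define the 2-variable Krawtchouk polynomial \[ P_{m_1,m_2}(x_1,x_2)=\sum_{\substack{i,j,k,l\ge 0\\ i+j+k+l\le N}}\frac{(-m_1)_{i+j}(-m_2)_{k+l}(-x_1)_{i+k}(-x_2)_{j+l}}{i!\,j!\,k!\,l!\,(-N)_{i+j+k+l}}\,u_1^i v_1^j u_2^k v_2^l . \] The trinomial distribution is $b_2(x_1,x_2;N;\eta_1,\eta_2)=\frac{N!}{x_1!\,x_2!\,(N-x_1-x_2)!}\eta_1^{x_1}\eta_2^{x_2}(1-\eta_1-\eta_2)^{N-x_1-x_2}$. *)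

(* Complex numbers: an arbitrary numClosedFieldType C
   (e.g. the complex numbers); the eta's are elements of C with 0 < eta < 1,
   which forces them to be real. *)
From HB Require Import structures.
From mathcomp Require Import all_boot all_order all_algebra.
Set Implicit Arguments. Unset Strict Implicit. Unset Printing Implicit Defensive.
Import Order.TTheory GRing.Theory Num.Theory.
Local Open Scope ring_scope.

Definition poch {R : ringType} (a : R) (k : nat) : R :=
  \prod_(i < k) (a + i%:R).

Definition krawtchouk2 {C : fieldType} (N : nat) (u1 v1 u2 v2 : C)
  (m1 m2 x1 x2 : nat) : C :=
  \sum_(i < N.+1) \sum_(j < N.+1) \sum_(k < N.+1)
   \sum_(l < N.+1 | (i + j + k + l <= N)%N)
    (poch (- m1%:R) (i + j) * poch (- m2%:R) (k + l)
     * poch (- x1%:R) (i + k) * poch (- x2%:R) (j + l))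
    / ((i`! * j`! * k`! * l`!)%:R * poch (- N%:R) (i + j + k + l))
    * u1 ^+ i * v1 ^+ j * u2 ^+ k * v2 ^+ l.

Definition trinomial {C : fieldType} (N x1 x2 : nat) (eta1 eta2 : C) : C :=
  (N`!)%:R / ((x1`! * x2`! * (N - x1 - x2)`!)%:R)
  * eta1 ^+ x1 * eta2 ^+ x2 * (1 - eta1 - eta2) ^+ (N - x1 - x2).

(* Written as a polynomial in (-x1)_(i+k) (-x2)_(j+l), the Krawtchouk
   polynomial can be averaged term by term against the trinomial
   distribution, whose Pochhammer moments are
   E[(-x1)_a (-x2)_b] = (-N)_(a+b) eta1^a eta2^b (two nested binomial
   theorems).  The factor (-N)_(i+j+k+l) then cancels the denominator, and
   what is left is the product of the expansions
   (1 - a - b)^m = sum (-m)_(i+j) a^i b^j / (i! j!), the constraint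
   i + j + k + l <= N being harmless because the terms vanish as soon as
   i + j > n1 or k + l > n2. *)

From HB Require Import structures.
From mathcomp Require Import all_boot all_order all_algebra.
From mathcomp Require Import ssrAC ring.
Import Order.TTheory GRing.Theory Num.Theory.
Local Open Scope ring_scope.

Lemma ffactnD (m i j : nat) : (m ^_ (i + j) = m ^_ i * (m - i) ^_ j)%N.
Proof.
elim: j => [|j IH]; first by rewrite addn0 muln1.
by rewrite addnS !ffactnSr IH subnDA mulnA.
Qed.

Lemma mul_bin_ffact (M x b : nat) : (b <= x)%N ->
  ('C(M, x) * x ^_ b = M ^_ b * 'C(M - b, x - b))%N.
Proof.
move=> bx; case: (leqP x M) => xM; last first.
  rewrite bin_small // mul0n; case: (leqP b M) => bM; last by rewrite ffact_small.
  by rewrite bin_small ?muln0 // ltn_sub2rE.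
have bM : (b <= M)%N by apply: leq_trans xM.
have pos : (0 < (x - b)`! * (M - x)`!)%N by rewrite muln_gt0 !fact_gt0.
apply/eqP; rewrite -(eqn_pmul2r pos); apply/eqP.
have e1 : (M - b - (x - b) = M - x)%N by rewrite subnBA // subnK.
transitivity (M`!); first by rewrite -mulnA (mulnA (x ^_ b)) ffact_fact // bin_fact.
by rewrite -e1 -mulnA bin_fact ?leq_sub2r // ffact_fact.
Qed.

Lemma mul_bin_ffact_sub (N x b : nat) : (x <= N)%N ->
  ('C(N, x) * (N - x) ^_ b = N ^_ b * 'C(N - b, x))%N.
Proof.
move=> xN; case: (leqP b (N - x)) => h.
  have xNb : (x <= N - b)%N.
    by rewrite leq_subRL ?(leq_trans h) ?leq_subr // addnC -leq_subRL.
  by rewrite -{1}(bin_sub xN) mul_bin_ffact // subnAC bin_sub.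
rewrite ffact_small // muln0; case: (leqP b N) => bN; last by rewrite ffact_small.
by rewrite bin_small ?muln0 // ltn_subLR // addnC -ltn_subLR.
Qed.

Lemma poch_oppn {R : comNzRingType} (m k : nat) :
  poch (- (m%:R : R)) k = (-1) ^+ k * (m ^_ k)%:R.
Proof.
rewrite /poch; elim: k => [|k IH]; first by rewrite big_ord0 mul1r.
rewrite big_ord_recr /= IH ffactnSr natrM exprS.
case: (leqP k m) => km; last by rewrite ffact_small // !(mul0r, mulr0).
by rewrite natrB // -opprB !mulrN mulN1r -!mulrA mulNr opprK [- _ + _]addrC.
Qed.

Lemma poch_oppn_eq0 {R : numDomainType} (m k : nat) :
  (poch (- (m%:R : R)) k == 0) = (m < k)%N.
Proof.
by rewrite poch_oppn mulf_eq0 signr_eq0 pnatr_eq0 eqn0Ngt ffact_gt0 -ltnNge.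
Qed.

Lemma binomial_ffact_moment {R : comNzRingType} (M K b : nat) (p q : R) :
  (M <= K)%N ->
  \sum_(x < K.+1) ('C(M, x) * x ^_ b)%:R * p ^+ x * q ^+ (M - x)
  = (M ^_ b)%:R * p ^+ b * (p + q) ^+ (M - b).
Proof.
move=> MK; pose F x := ('C(M, x) * x ^_ b)%:R * p ^+ x * q ^+ (M - x).
have -> : \sum_(x < K.+1) F x = \sum_(0 <= x < M.+1) F x.
  rewrite big_mkord [RHS](big_ord_widen K.+1 F) // [RHS]big_mkcond.
  apply: eq_bigr => x _; case: ifPn => //; rewrite -leqNgt => Mx.
  by rewrite /F bin_small // !mul0r.
case: (leqP b M) => bM; last first.
  rewrite ffact_small // !mul0r big1_seq // => x; rewrite mem_index_iota => /andP[_ xM].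
  by rewrite /F ffact_small ?muln0 ?mul0r // (leq_trans xM bM).
rewrite (big_cat_nat _ (n := b)) //=; last exact: ltnW.
rewrite big_nat_cond big1 ?add0r; last first.
  by move=> x /andP[/andP[_ xb] _]; rewrite /F ffact_small // muln0 !mul0r.
rewrite -{1}(add0n b) big_addn subSn // big_mkord addrC exprDn big_distrr /=.
apply: eq_bigr => y _; rewrite /F mul_bin_ffact ?leq_addl // addnK natrM exprD.
rewrite -subnDA addnC subnDA -[X in _ = _ * X]mulr_natr !mulrA.
by rewrite [LHS](ACl (1*4*5*3*2)).
Qed.

Lemma trinomialE (C : numFieldType) (N x1 x2 : nat) (e1 e2 : C) :
  (x1 + x2 <= N)%N ->
  trinomial N x1 x2 e1 e2 = ('C(N, x1) * 'C(N - x1, x2))%:R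
    * e1 ^+ x1 * e2 ^+ x2 * (1 - e1 - e2) ^+ (N - x1 - x2).
Proof.
move=> h; have h1 : (x1 <= N)%N by apply: leq_trans h; rewrite leq_addr.
have h2 : (x2 <= N - x1)%N by rewrite leq_subRL // addnC.
have E : ('C(N, x1) * 'C(N - x1, x2) * (x1`! * x2`! * (N - x1 - x2)`!))%N = N`!.
  by rewrite -(bin_fact h1) -(bin_fact h2) !mulnA [LHS](ACl (1*3*2*4*5)).
by rewrite /trinomial -E natrM mulfK // pnatr_eq0 -lt0n !muln_gt0 !fact_gt0.
Qed.

Definition trinomial_mean {C : fieldType} (N : nat) (e1 e2 : C)
  (f : nat -> nat -> C) : C :=
  \sum_(x1 < N.+1) \sum_(x2 < N.+1 | (x1 + x2 <= N)%N)
    trinomial N x1 x2 e1 e2 * f x1 x2.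

Section TrinomialMeanLinear.

Variables (C : fieldType) (N : nat) (e1 e2 : C).

Lemma eq_trinomial_mean (f g : nat -> nat -> C) :
  (forall x1 x2, f x1 x2 = g x1 x2) ->
  trinomial_mean N e1 e2 f = trinomial_mean N e1 e2 g.
Proof.
by move=> fg; apply: eq_bigr => x1 _; apply: eq_bigr => x2 _; rewrite fg.
Qed.

Lemma trinomial_mean_sum (I : finType) (P : pred I) (g : I -> nat -> nat -> C) :
  trinomial_mean N e1 e2 (fun x1 x2 => \sum_(i | P i) g i x1 x2)
  = \sum_(i | P i) trinomial_mean N e1 e2 (g i).
Proof.
rewrite /trinomial_mean exchange_big /=; apply: eq_bigr => x1 _.
by under eq_bigr => x2 _ do rewrite big_distrr; rewrite exchange_big.
Qed.

Lemma trinomial_meanZ (c : C) (f : nat -> nat -> C) :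
  trinomial_mean N e1 e2 (fun x1 x2 => c * f x1 x2)
  = c * trinomial_mean N e1 e2 f.
Proof.
rewrite /trinomial_mean big_distrr; apply: eq_bigr => x1 _.
by rewrite big_distrr; apply: eq_bigr => x2 _; rewrite mulrCA.
Qed.

End TrinomialMeanLinear.

Section TrinomialMoments.

Variables (C : numFieldType) (N : nat) (e1 e2 : C).

Lemma trinomial_ffact_moment (a b : nat) :
  trinomial_mean N e1 e2 (fun x1 x2 => (x1 ^_ a)%:R * (x2 ^_ b)%:R)
  = (N ^_ (a + b))%:R * e1 ^+ a * e2 ^+ b.
Proof.
set c := 1 - e1 - e2.
transitivity (\sum_(x1 < N.+1) ('C(N, x1) * x1 ^_ a)%:R * e1 ^+ x1 *
   \sum_(x2 < N.+1) ('C(N - x1, x2) * x2 ^_ b)%:R * e2 ^+ x2 * c ^+ (N - x1 - x2)).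
  apply: eq_bigr => x1 _; rewrite big_mkcond big_distrr; apply: eq_bigr => x2 _ /=.
  case: ifPn => [h|]; first by rewrite trinomialE // !natrM !mulrA [LHS](ACl (1*6*3*2*7*4*5)).
  rewrite -ltnNge => h; have x1N : (x1 <= N)%N by rewrite -ltnS.
  by rewrite (@bin_small (N - x1) x2) ?ltn_subLR // !(mul0n, mul0r, mulr0).
transitivity (\sum_(x1 < N.+1) (N ^_ b)%:R * e2 ^+ b *
   (('C(N - b, x1) * x1 ^_ a)%:R * e1 ^+ x1 * (1 - e1) ^+ (N - b - x1))).
  apply: eq_bigr => x1 _; rewrite binomial_ffact_moment ?leq_subr //.
  have -> : e2 + c = 1 - e1 by rewrite addrC subrK.
  rewrite subnAC !natrM !mulrA [LHS](ACl (1*4*2*3*5*6)) /=.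
  rewrite -natrM mul_bin_ffact_sub; last by rewrite -ltnS.
  by rewrite natrM [LHS](ACl (1*5*2*3*4*6)).
rewrite -big_distrr /= binomial_ffact_moment ?leq_subr // addrC subrK expr1n mulr1.
by rewrite addnC ffactnD natrM !mulrA [LHS](ACl (1*3*4*2)).
Qed.

Lemma trinomial_poch_moment (a b : nat) :
  trinomial_mean N e1 e2
    (fun x1 x2 => poch (- (x1%:R : C)) a * poch (- (x2%:R : C)) b)
  = poch (- (N%:R : C)) (a + b) * e1 ^+ a * e2 ^+ b.
Proof.
rewrite (@eq_trinomial_mean _ _ _ _ _
  (fun x1 x2 => (-1) ^+ (a + b) * ((x1 ^_ a)%:R * (x2 ^_ b)%:R))); last first.
  by move=> x1 x2; rewrite !poch_oppn exprD; ring.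
by rewrite trinomial_meanZ trinomial_ffact_moment poch_oppn !mulrA.
Qed.

End TrinomialMoments.

Definition trinomial_term {R : fieldType} (m : nat) (a b : R) (i j : nat) : R :=
  poch (- (m%:R : R)) (i + j) / (i`! * j`!)%:R * a ^+ i * b ^+ j.

Lemma trinomial_term_eq0 {R : fieldType} (m : nat) (a b : R) (i j : nat) :
  (m < i + j)%N -> trinomial_term m a b i j = 0.
Proof. by move=> h; rewrite /trinomial_term poch_oppn ffact_small // mulr0 !mul0r. Qed.

Lemma sum_trinomial_term {R : numFieldType} (m N : nat) (a b : R) : (m <= N)%N ->
  \sum_(i < N.+1) \sum_(j < N.+1) trinomial_term m a b i j = (1 - a - b) ^+ m.
Proof.
move=> mN.
(* (-m)_(i+j) / (i! j!) = (-1)^(i+j) C(m, i) C(m - i, j): two nested binomial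
   expansions, written as instances of binomial_ffact_moment with b = 0. *)
transitivity (\sum_(i < N.+1) ('C(m, i) * i ^_ 0)%:R * (- a) ^+ i *
   \sum_(j < N.+1) ('C(m - i, j) * j ^_ 0)%:R * (- b) ^+ j * 1 ^+ (m - i - j)).
  apply: eq_bigr => i _; rewrite big_distrr; apply: eq_bigr => j _ /=.
  have E : (m ^_ (i + j) = 'C(m, i) * 'C(m - i, j) * (i`! * j`!))%N.
    by rewrite ffactnD -!bin_ffact !mulnA [RHS](ACl (1*3*2*4)).
  have fact_neq0 : (i`! * j`!)%:R != 0 :> R by rewrite pnatr_eq0 -lt0n muln_gt0 !fact_gt0.
  rewrite /trinomial_term poch_oppn E (natrM _ ('C(m, i) * _)) mulrA mulfK //.
  rewrite (ffactn0 i) (ffactn0 j) 2!muln1 expr1n (exprNn a) (exprNn b) exprD.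
  by rewrite natrM; ring.
under eq_bigr => i _ do rewrite
  (binomial_ffact_moment _ _ _ _ _ (leq_trans (leq_subr i m) mN))
  [(_ - _) ^_ 0]ffactn0 mulr1n expr0 mulr1 mul1r subn0.
rewrite binomial_ffact_moment // ffactn0 mulr1n expr0 mulr1 mul1r subn0.
by congr (_ ^+ _); ring.
Qed.

Lemma trinomial_mean_krawtchouk2 {C : numFieldType} (N : nat) (e1 e2 : C)
    (u1 v1 u2 v2 : C) (n1 n2 : nat) :
  trinomial_mean N e1 e2 (krawtchouk2 N u1 v1 u2 v2 n1 n2)
  = \sum_(i < N.+1) \sum_(j < N.+1) \sum_(k < N.+1)
      \sum_(l < N.+1 | (i + j + k + l <= N)%N)
        trinomial_term n1 (e1 * u1) (e2 * v1) i j
        * trinomial_term n2 (e1 * u2) (e2 * v2) k l.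
Proof.
pose W i j k l := poch (- (n1%:R : C)) (i + j) * poch (- (n2%:R : C)) (k + l)
  / ((i`! * j`! * k`! * l`!)%:R * poch (- (N%:R : C)) (i + j + k + l))
  * u1 ^+ i * v1 ^+ j * u2 ^+ k * v2 ^+ l.
rewrite (@eq_trinomial_mean _ _ _ _ _ (fun x1 x2 =>
  \sum_(i < N.+1) \sum_(j < N.+1) \sum_(k < N.+1)
    \sum_(l < N.+1 | (i + j + k + l <= N)%N)
      W i j k l * (poch (- (x1%:R : C)) (i + k) * poch (- (x2%:R : C)) (j + l)))).
  rewrite trinomial_mean_sum; apply: eq_bigr => i _.
  rewrite trinomial_mean_sum; apply: eq_bigr => j _.
  rewrite trinomial_mean_sum; apply: eq_bigr => k _.
  rewrite trinomial_mean_sum; apply: eq_bigr => l ijkl_le.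
  rewrite trinomial_meanZ trinomial_poch_moment /W /trinomial_term.
  have -> : (i + k + (j + l) = i + j + k + l)%N by rewrite addnACA addnA.
  have PN0 : poch (- (N%:R : C)) (i + j + k + l) != 0.
    by rewrite poch_oppn_eq0 -leqNgt.
  rewrite !natrM !exprD !exprMn; field.
  by rewrite PN0 !pnatr_eq0 -!lt0n !fact_gt0.
move=> x1 x2; apply: eq_bigr => i _; apply: eq_bigr => j _.
apply: eq_bigr => k _; apply: eq_bigr => l _; rewrite /W !mulrA.
by rewrite [LHS](ACl (1*2*5*6*7*8*9*3*4)).
Qed.

Lemma truncated_sum_mul {R : pzSemiRingType} (N n1 n2 : nat)
    (F G : nat -> nat -> R) :
  (n1 + n2 <= N)%N ->
  (forall i j, (n1 < i + j)%N -> F i j = 0) ->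
  (forall k l, (n2 < k + l)%N -> G k l = 0) ->
  \sum_(i < N.+1) \sum_(j < N.+1) \sum_(k < N.+1)
     \sum_(l < N.+1 | (i + j + k + l <= N)%N) F i j * G k l
  = (\sum_(i < N.+1) \sum_(j < N.+1) F i j)
    * (\sum_(k < N.+1) \sum_(l < N.+1) G k l).
Proof.
move=> hn F0 G0; rewrite big_distrl; apply: eq_bigr => i _.
rewrite big_distrl; apply: eq_bigr => j _; rewrite big_distrr; apply: eq_bigr => k _.
rewrite big_distrr big_mkcond; apply: eq_bigr => l _.
case: ifPn => //=; rewrite -ltnNge => hl.
case: (leqP (i + j) n1) => ij; last by rewrite F0 // mul0r.
case: (leqP (k + l) n2) => kl; last by rewrite G0 // mulr0.
by move: hl; rewrite -addnA ltnNge (leq_trans (leq_add ij kl) hn).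
Qed.

Theorem mainTheorem1 (C : numClosedFieldType) (N : nat) (eta1 eta2 : C)
  (h1 : 0 < eta1) (h1' : eta1 < 1) (h2 : 0 < eta2) (h2' : eta2 < 1)
  (h12 : eta1 + eta2 < 1) (u1 v1 u2 v2 : C) (n1 n2 : nat)
  (hn : (n1 + n2 <= N)%N) :
  \sum_(x1 < N.+1) \sum_(x2 < N.+1 | (x1 + x2 <= N)%N)
     trinomial N x1 x2 eta1 eta2 * krawtchouk2 N u1 v1 u2 v2 n1 n2 x1 x2
  = (1 - eta1 * u1 - eta2 * v1) ^+ n1 * (1 - eta1 * u2 - eta2 * v2) ^+ n2.
Proof.
have hn1 : (n1 <= N)%N := leq_trans (leq_addr n2 n1) hn.
have hn2 : (n2 <= N)%N := leq_trans (leq_addl n1 n2) hn.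
rewrite -/(trinomial_mean N eta1 eta2 (krawtchouk2 N u1 v1 u2 v2 n1 n2)).
rewrite trinomial_mean_krawtchouk2 (@truncated_sum_mul _ N n1 n2 _ _ hn).
- by rewrite !sum_trinomial_term.
- exact: trinomial_term_eq0.
- exact: trinomial_term_eq0.
Qed.
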